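(* For every small category $C$, the category $Sd^2(C)=Sd(Sd(C))$ is a poset; that is, for any two objects $X,Y$ of $Sd^2(C)$ there is at most one morphism $X\to Y$, and if there are morphisms $X\to Y$ and $Y\to X$ then $X=Y$.
   Context: Let $C$ be a small category. For $q\ge 0$ let $[q]=\{0<1<\dots<q\}$, viewed as a category. A $q$-simplex of the nerve $NC$ is a functor $X:[q]\to C$, i.e. a chain $X_0\to X_1\to\dots\to X_q$ of $q$ composable arrows of $C$; write $q_X=q$. A simplex is degenerate if it is of the form $Y\circ s$ for a simplex $Y$ and a surjective order-preserving map $s:[q]\to[p]$ with $p<q$ (equivalently, one of its arrows $X_{i-1}\to X_i$ is an identity); otherwise it is non-degenerate. The category $\Delta/C$ has as objects all simplices of $NC$ (of all dimensions $q\ge0$), and a morphism $X\to Y$ is an order-preserving map $\xi:[q_X]\to[q_Y]$ with $Y\circ\xi=X$, written $\xi_*$; composition is composition of maps. Given a simplex $X$ of dimension $q$ and a surjective order-preserving $s:[q+1]\to[q]$, let $d,d':[q]\to[q+1]$ be the two order-preserving right inverses of $s$; the two morphisms $d_*,d'_*:X\to X\circ s$ are called elementary equivalent. Let $\sim$ be the smallest equivalence relation on the morphisms of $\Delta/C$ (relating only morphisms with the same source and target) which is compatible with composition and contains all pairs of elementary equivalent morphisms. $[\Delta/C]$ is the quotient category with the same objects and with morphisms the $\sim$-classes $[\xi_*]$. The subdivision $Sd(C)$ is the full subcategory of $[\Delta/C]$ whose objects are the non-degenerate simplices of $NC$. Since $Sd(C)$ is again a small category, $Sd^2(C)=Sd(Sd(C))$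 is defined by applying the same construction to $Sd(C)$. *)

From Stdlib Require Import ProofIrrelevance FunctionalExtensionality
  PropExtensionality IndefiniteDescription.
From mathcomp Require Import all_boot.

Set Implicit Arguments.
Unset Strict Implicit.
Unset Printing Implicit Defensive.

(** * Small categories (composition written in diagrammatic order). *)
Record Cat := MkCat {
  Ob :> Type;
  Hom : Ob -> Ob -> Type;
  idc : forall a, Hom a a;
  compc : forall a b c, Hom a b -> Hom b c -> Hom a c;
  comp1c : forall a b (f : Hom a b), compc (idc a) f = f;
  compc1 : forall a b (f : Hom a b), compc f (idc b) = f;
  compcA : forall a b c d (f : Hom a b) (g : Hom b c) (h : Hom c d),
      compc f (compc g h) = compc (compc f g) h
}.
Arguments Hom : clear implicits.
Arguments idc {C} a : rename.
Arguments compc {C a b c} f g : rename.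

(** * Order-preserving maps [p] -> [q], where [q] = 'I_q.+1 = {0<...<q}. *)
Definition mono (p q : nat) :=
  {f : 'I_p.+1 -> 'I_q.+1 | forall i j : 'I_p.+1, i <= j -> f i <= f j}.

Definition mono_id (p : nat) : mono p p := @exist _ (fun f : 'I_p.+1 -> 'I_p.+1 => forall i j : 'I_p.+1, i <= j -> f i <= f j) id (fun i j h => h).

Definition mono_comp p q r (xi : mono p q) (eta : mono q r) : mono p r :=
  @exist _ (fun f : 'I_p.+1 -> 'I_r.+1 => forall i j : 'I_p.+1, i <= j -> f i <= f j)
    (fun i => proj1_sig eta (proj1_sig xi i))
    (fun i j h => proj2_sig eta _ _ (proj2_sig xi i j h)).

(** * Simplices of the nerve: functors [q] -> C. *)
Section Nerve.
Variable C : Cat.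

Record simplex := Simplex {
  sdim : nat;
  sob : 'I_sdim.+1 -> Ob C;
  shom : forall i j : 'I_sdim.+1, i <= j -> Hom C (sob i) (sob j);
  shom_id : forall (i : 'I_sdim.+1) (h : i <= i), shom h = idc (sob i);
  shom_comp : forall i j k : 'I_sdim.+1, forall (hij : i <= j) (hjk : j <= k) (hik : i <= k),
      shom hik = compc (shom hij) (shom hjk)
}.

Arguments sob s i : clear implicits.
Arguments shom s {i j} h.
Arguments sdim s : clear implicits.

Definition scomp (Y : simplex) p (xi : mono p (sdim Y)) : simplex.
Proof.
refine (@Simplex p (fun i => sob Y (proj1_sig xi i))
          (fun i j h => shom Y (proj2_sig xi i j h)) _ _).
- by move=> i h; apply: shom_id.
- by move=> i j k hij hjk hik; apply: shom_comp.
Defined.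

Lemma simplex_ext n ob (h1 h2 : forall i j : 'I_n.+1, i <= j -> Hom C (ob i) (ob j))
  p1 p2 q1 q2 :
  (forall i j h, h1 i j h = h2 i j h) ->
  @Simplex n ob h1 p1 q1 = @Simplex n ob h2 p2 q2.
Proof.
move=> e.
have E : h1 = h2.
  apply: functional_extensionality_dep => i.
  apply: functional_extensionality_dep => j.
  apply: functional_extensionality_dep => h.
  exact: e.
subst h2; f_equal; apply: proof_irrelevance.
Qed.

Lemma scomp_id (X : simplex) : scomp (mono_id (sdim X)) = X.
Proof. by case: X => n ob h p q; apply: simplex_ext. Qed.

Lemma scomp_comp (Z : simplex) p q (xi : mono p q) (eta : mono q (sdim Z)) :
  scomp (mono_comp xi eta) = scomp (Y := scomp eta) xi.
Proof.
apply: simplex_ext => i j h /=; f_equal; apply: proof_irrelevance.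
Qed.

Definition degenerate (X : simplex) : Prop :=
  exists (Y : simplex) (s : mono (sdim X) (sdim Y)),
    [/\ sdim Y < sdim X,
        (forall j, exists i, proj1_sig s i = j) &
        X = scomp s].

Definition nondegenerate (X : simplex) : Prop := ~ degenerate X.

Definition DHom (X Y : simplex) := {xi : mono (sdim X) (sdim Y) | scomp xi = X}.

Definition did (X : simplex) : DHom X X := exist _ (mono_id (sdim X)) (scomp_id X).

Lemma scomp_transport (W Y : simplex) (e : W = Y) p
  (f : mono p (sdim Y)) (f' : mono p (sdim W)) :
  (forall i, nat_of_ord (proj1_sig f' i) = proj1_sig f i) ->
  scomp f' = scomp f.
Proof.
subst W => e.
have E : proj1_sig f' = proj1_sig f.
  by apply: functional_extensionality => i; apply: val_inj; apply: e.
case: f' f E {e} => f' hf' [f hf] /= E; subst f'.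
by have -> : hf' = hf by apply: proof_irrelevance.
Qed.

Lemma dcomp_proof (X Y Z : simplex) (f : DHom X Y) (g : DHom Y Z) :
  scomp (Y := Z) (mono_comp (proj1_sig f) (proj1_sig g)) = X.
Proof.
case: f => f hf; case: g => g hg /=.
rewrite scomp_comp -[RHS]hf; exact: scomp_transport.
Qed.

Definition dcomp (X Y Z : simplex) (f : DHom X Y) (g : DHom Y Z) : DHom X Z :=
  exist _ (mono_comp (proj1_sig f) (proj1_sig g)) (dcomp_proof f g).

Lemma dhom_eq (X Y : simplex) (f g : DHom X Y) :
  (forall i, proj1_sig (proj1_sig f) i = proj1_sig (proj1_sig g) i) -> f = g.
Proof.
case: f => [[f mf] hf]; case: g => [[g mg] hg] /= e.
have E : f = g by apply: functional_extensionality.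
subst g; move: hf; have -> : mf = mg by apply: proof_irrelevance.
by move=> hf; f_equal; apply: proof_irrelevance.
Qed.

(** Elementary equivalent pairs: [d_*, d'_* : X -> X \circ s] where
    [s : [q+1] -> [q]] is surjective order-preserving and [d, d'] are
    order-preserving right inverses of [s].  (Morphisms of Delta/C are
    order-preserving, so [f], [g] below range exactly over such [d_*].) *)
Definition elementary (X Y : simplex) (f g : DHom X Y) : Prop :=
  exists s : mono (sdim Y) (sdim X),
    [/\ sdim Y = (sdim X).+1,
        (forall j, exists i, proj1_sig s i = j),
        Y = scomp s,
        (forall i, proj1_sig s (proj1_sig (proj1_sig f) i) = i) &
        (forall i, proj1_sig s (proj1_sig (proj1_sig g) i) = i)].

Inductive sim : forall X Y : simplex, DHom X Y -> DHom X Y -> Prop :=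
| sim_elem X Y (f g : DHom X Y) : elementary f g -> sim f g
| sim_refl X Y (f : DHom X Y) : sim f f
| sim_sym X Y (f g : DHom X Y) : sim f g -> sim g f
| sim_trans X Y (f g h : DHom X Y) : sim f g -> sim g h -> sim f h
| sim_compl X Y Z (f f' : DHom X Y) (g : DHom Y Z) :
    sim f f' -> sim (dcomp f g) (dcomp f' g)
| sim_compr X Y Z (f : DHom X Y) (g g' : DHom Y Z) :
    sim g g' -> sim (dcomp f g) (dcomp f g').

Definition qhom (X Y : simplex) := {P : DHom X Y -> Prop | exists f, P = sim f}.

Definition cls (X Y : simplex) (f : DHom X Y) : qhom X Y :=
  exist _ (sim f) (ex_intro _ f erefl).

Definition rep (X Y : simplex) (P : qhom X Y) : DHom X Y :=
  proj1_sig (constructive_indefinite_description _ (proj2_sig P)).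

Lemma cls_rep (X Y : simplex) (P : qhom X Y) : cls (rep P) = P.
Proof.
rewrite /rep; case: (constructive_indefinite_description _ _) => f /= e.
case: P e => P hP /= e; subst P; rewrite /cls; f_equal; apply: proof_irrelevance.
Qed.

Lemma cls_eq (X Y : simplex) (f g : DHom X Y) : sim f g -> cls f = cls g.
Proof.
move=> fg.
have E : sim f = sim g.
  apply: functional_extensionality => h; apply: propositional_extensionality.
  split=> H; first exact: sim_trans (sim_sym fg) H.
  exact: sim_trans fg H.
rewrite /cls; move: (ex_intro _ f _) (ex_intro _ g _); rewrite E => p1 p2.
by f_equal; apply: proof_irrelevance.
Qed.

Lemma sim_rep (X Y : simplex) (f : DHom X Y) : sim (rep (cls f)) f.
Proof.
have := cls_rep (cls f); rewrite /cls => [[E]].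
by rewrite E; apply: sim_refl.
Qed.

Definition qid (X : simplex) : qhom X X := cls (did X).
Definition qcomp (X Y Z : simplex) (P : qhom X Y) (Q : qhom Y Z) : qhom X Z :=
  cls (dcomp (rep P) (rep Q)).

Lemma dcomp1 (X Y : simplex) (f : DHom X Y) : dcomp (did X) f = f.
Proof. exact: dhom_eq. Qed.
Lemma dcompd1 (X Y : simplex) (f : DHom X Y) : dcomp f (did Y) = f.
Proof. exact: dhom_eq. Qed.
Lemma dcompA (X Y Z W : simplex) (f : DHom X Y) (g : DHom Y Z) (h : DHom Z W) :
  dcomp f (dcomp g h) = dcomp (dcomp f g) h.
Proof. exact: dhom_eq. Qed.

Lemma sim_comp (X Y Z : simplex) (f f' : DHom X Y) (g g' : DHom Y Z) :
  sim f f' -> sim g g' -> sim (dcomp f g) (dcomp f' g').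
Proof.
move=> H1 H2; apply: sim_trans (sim_compl g H1) _; exact: sim_compr.
Qed.

Lemma qcomp1 (X Y : simplex) (P : qhom X Y) : qcomp (qid X) P = P.
Proof.
rewrite /qcomp /qid -[in RHS](cls_rep P); apply: cls_eq.
rewrite -[X in sim _ X]dcomp1; apply: sim_comp; [exact: sim_rep|exact: sim_refl].
Qed.

Lemma qcompq1 (X Y : simplex) (P : qhom X Y) : qcomp P (qid Y) = P.
Proof.
rewrite /qcomp /qid -[in RHS](cls_rep P); apply: cls_eq.
rewrite -[X in sim _ X]dcompd1; apply: sim_comp; [exact: sim_refl|exact: sim_rep].
Qed.

Lemma qcompA (X Y Z W : simplex) (P : qhom X Y) (Q : qhom Y Z) (R : qhom Z W) :
  qcomp P (qcomp Q R) = qcomp (qcomp P Q) R.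
Proof.
rewrite /qcomp; apply: cls_eq.
apply: sim_trans (sim_comp (sim_refl _) (sim_rep _)) _; rewrite dcompA.
exact: sim_comp (sim_sym (sim_rep _)) (sim_refl _).
Qed.

End Nerve.

Definition SdOb (C : Cat) := {X : simplex C | nondegenerate X}.

Definition Sd (C : Cat) : Cat :=
  @MkCat (SdOb C)
    (fun X Y => qhom (proj1_sig X) (proj1_sig Y))
    (fun X => qid (proj1_sig X))
    (fun X Y Z P Q => qcomp P Q)
    (fun X Y P => qcomp1 P)
    (fun X Y P => qcompq1 P)
    (fun X Y Z W P Q R => qcompA P Q R).

From Stdlib Require Import ProofIrrelevance FunctionalExtensionality.
From mathcomp Require Import all_boot zify.

Unset Printing Implicit Defensive.

(* A morphism of Delta/C between non-degenerate simplices is injective on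
   vertices: if it identified two consecutive vertices, the source would have
   an identity edge and hence be degenerate.  As an injective order-preserving
   self-map of [n] is the identity, comparing dimensions shows that Sd(C) is
   antisymmetric and that all its endomorphisms are identities.  In any
   category D with these two properties a non-degenerate simplex has pairwise
   distinct vertices: a repetition Y_a = Y_b with a < b gives, by antisymmetry,
   Y_a = Y_(a+1), and then the edge Y_a -> Y_(a+1) is an endomorphism, hence an
   identity.  So a morphism of Delta/D into a non-degenerate simplex is
   determined by the vertices of its source, which makes Sd(D) thin.  Taking
   D = Sd(C) gives the theorem. *)

Arguments sob {C} s i.
Arguments shom {C} s {i j} h.

Definition castHom {D : Cat} {a b a' b' : D} (ea : a = a') (eb : b = b')
    (f : Hom D a b) : Hom D a' b' :=
  match ea in _ = x return Hom D x b' with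
  | erefl => match eb in _ = y return Hom D a y with erefl => f end
  end.

Lemma castHom_id (D : Cat) (a b : D) (ea : a = a) (eb : b = b) (f : Hom D a b) :
  castHom ea eb f = f.
Proof. by rewrite (proof_irrelevance _ ea erefl) (proof_irrelevance _ eb erefl). Qed.

Lemma castHom_esymK (D : Cat) (a b b' : D) (e : b' = b) (u : Hom D a b) :
  castHom erefl e (castHom erefl (esym e) u) = u.
Proof. by subst b'. Qed.

Lemma simplex_eq_cast {D : Cat} {n ob1 ob2 h1 h2 p1 p2 q1 q2}
    (eo : forall i : 'I_n.+1, ob1 i = ob2 i) :
  (forall i j h, castHom (eo i) (eo j) (h1 i j h) = h2 i j h) ->
  @Simplex D n ob1 h1 p1 q1 = @Simplex D n ob2 h2 p2 q2.
Proof.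
move=> eh; have Eob : ob1 = ob2 by apply: functional_extensionality.
by subst ob2; apply: simplex_ext => i j h; rewrite -eh castHom_id.
Qed.

Lemma scomp_eq_self {D : Cat} {Y : simplex D} {xi : mono (sdim Y) (sdim Y)}
    (eo : forall i, sob Y i = sob Y (proj1_sig xi i)) :
  (forall (i j : 'I_(sdim Y).+1) (h : i <= j),
      castHom (eo i) (eo j) (shom Y h) = shom Y (proj2_sig xi i j h)) ->
  scomp xi = Y.
Proof. by case: Y xi eo => n ob h p q xi eo eh; symmetry; apply: (simplex_eq_cast eo). Qed.

Lemma homo_inj_ltn_ord {p q} {f : 'I_p.+1 -> 'I_q.+1} :
  {homo f : i j / i <= j} -> injective f -> {homo f : i j / i < j}.
Proof.
move=> f_homo f_inj.
apply: (inj_homo (aR := fun i j : 'I_p.+1 => i <= j)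
                 (rR := fun i j : 'I_q.+1 => i <= j)) => //.
all: by move=> ? ?; rewrite ltn_neqAle.
Qed.

Lemma homo_inj_leq_dim {p q} {f : 'I_p.+1 -> 'I_q.+1} : injective f -> p <= q.
Proof. by move=> /leq_card; rewrite !card_ord. Qed.

Lemma homo_inj_leq_self {p q} {f : 'I_p.+1 -> 'I_q.+1} :
  {homo f : i j / i <= j} -> injective f -> forall i : 'I_p.+1, i <= f i.
Proof.
move=> f_homo f_inj; have f_lt := homo_inj_ltn_ord f_homo f_inj.
suff le_inord k : k <= p -> k <= f (inord k).
  by move=> i; have := le_inord i (leq_ord i); rewrite inord_val.
elim: k => [|k IHk] lt_kp //.
have lt_k : @inord p k < @inord p k.+1 by rewrite !inordK //; lia.
by have := f_lt _ _ lt_k; have := IHk (ltnW lt_kp); lia.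
Qed.

Lemma homo_inj_ord_id {n} {f : 'I_n.+1 -> 'I_n.+1} :
  {homo f : i j / i <= j} -> injective f -> f =1 id.
Proof.
move=> f_homo f_inj i; apply: val_inj => /=; apply/eqP; rewrite eqn_leq.
rewrite (homo_inj_leq_self f_homo f_inj) andbT.
pose g i := rev_ord (f (rev_ord i)).
have g_homo : {homo g : i j / i <= j}.
  by move=> a b /= le_ab; rewrite leq_sub2l // ltnS f_homo //= leq_sub2l.
have g_inj : injective g by move=> a b /rev_ord_inj/f_inj/rev_ord_inj.
have := homo_inj_leq_self g_homo g_inj (rev_ord i).
by rewrite /g rev_ordK /=; have := ltn_ord (f i); lia.
Qed.

(* The codegeneracy s^k : [n] -> [n-1], hitting k twice, and the coface
   d^(k+1) : [n-1] -> [n], missing k+1; d^(k+1) s^k collapses k+1 onto k. *)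
Section Codegeneracy.
Context {n k : nat} (lt_kn : k < n).

Lemma codegeneracy_subproof (i : 'I_n.+1) :
  (if i <= k then i : nat else i.-1) < n.-1.+1.
Proof. by have := ltn_ord i; case: (leqP i k); lia. Qed.

Lemma coface_subproof (j : 'I_n.-1.+1) : (if j <= k then j : nat else j.+1) < n.+1.
Proof. by have := ltn_ord j; case: (leqP j k); lia. Qed.

Definition codegeneracy : mono n n.-1.
Proof.
exists (fun i => Ordinal (codegeneracy_subproof i)) => i j /=.
by case: (leqP i k); case: (leqP j k); lia.
Defined.

Definition coface : mono n.-1 n.
Proof.
exists (fun j => Ordinal (coface_subproof j)) => i j /=.
by case: (leqP i k); case: (leqP j k); lia.
Defined.

Lemma codegeneracyK : cancel (proj1_sig coface) (proj1_sig codegeneracy).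
Proof. by move=> j; apply: val_inj => /=; case: (leqP j k) => ?; case: leqP; lia. Qed.

Lemma coface_codegeneracy (i : 'I_n.+1) :
  proj1_sig coface (proj1_sig codegeneracy i) = (if i == k.+1 :> nat then k else i) :> nat.
Proof. by rewrite /=; case: (leqP i k) => ?; case: leqP => ?; case: eqP; lia. Qed.

End Codegeneracy.

Section IdentityEdge.
Context {D : Cat} {Y : simplex D} {k : nat} (lt_k : k < sdim Y).
Local Notation v := (@inord (sdim Y) k).
Local Notation v' := (@inord (sdim Y) k.+1).
Context (e : sob Y v = sob Y v').
Context (id_edge : forall h : v <= v', shom Y h = castHom erefl e (idc _)).

Lemma scomp_collapse (xi : mono (sdim Y) (sdim Y)) :
  (forall i, proj1_sig xi i = (if i == k.+1 :> nat then k else i) :> nat) ->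
  scomp xi = Y.
Proof.
move=> xiE.
have xi_spec i : proj1_sig xi i = i \/ (i = v' /\ proj1_sig xi i = v).
  have := xiE i; case: eqP => [ik | nik] xi_i; [right | left].
    by split; apply: val_inj; rewrite /= ?xi_i inordK //; lia.
  exact: val_inj.
have eo i : sob Y i = sob Y (proj1_sig xi i).
  by case: (xi_spec i) => [-> | [-> ->]] //; rewrite e.
apply: (scomp_eq_self eo) => i j h.
move: (proj2_sig xi i j h) (eo i) (eo j) (xi_spec i) (xi_spec j).
move: (proj1_sig xi i) (proj1_sig xi j) => a b hab ea eb.
have le_v : v <= v' by rewrite !inordK //; lia.
case=> [Ea | [Ei Ea]] [Eb | [Ej Eb]]; subst a b; try subst i; try subst j.
- by rewrite castHom_id (bool_irrelevance h hab).
- rewrite (shom_comp hab le_v h) id_edge.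
  by move: eb e; move: (sob Y v') => o eb e'; subst o; rewrite !castHom_id compc1.
- rewrite (shom_comp le_v h hab) id_edge.
  move: ea e (shom Y h); move: (sob Y v') => o ea e' f; subst o.
  by rewrite !castHom_id comp1c.
- rewrite !shom_id; move: ea eb; move: (sob Y v') => o ea eb; subst o.
  exact: castHom_id.
Qed.

Lemma degenerate_of_identity_edge : degenerate Y.
Proof.
exists (scomp (coface lt_k)), (codegeneracy lt_k); split.
- by rewrite /=; lia.
- by move=> j; exists (proj1_sig (coface lt_k) j); apply: codegeneracyK.
- rewrite -scomp_comp; symmetry; apply: scomp_collapse => i.
  exact: coface_codegeneracy.
Qed.

End IdentityEdge.

Lemma inj_of_lt_neq {n T} {f : 'I_n -> T} :
  (forall i j : 'I_n, i < j -> f i <> f j) -> injective f.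
Proof.
move=> f_lt i j E; case: (ltngtP i j) => [lt_ij | lt_ji | /val_inj //].
- by case: (f_lt _ _ lt_ij E).
- by case: (f_lt _ _ lt_ji (esym E)).
Qed.

Lemma shom_castE {D : Cat} {Y : simplex D} {a b : 'I_(sdim Y).+1} (hab : a <= b)
    (e : sob Y a = sob Y b) :
  a = b -> shom Y hab = castHom erefl e (idc _).
Proof. by move=> Eab; subst b; rewrite shom_id castHom_id. Qed.

Lemma nondegenerate_scomp_inj {D : Cat} {Y : simplex D} {p} {xi : mono p (sdim Y)} :
  nondegenerate (scomp xi) -> injective (proj1_sig xi).
Proof.
move=> nd; apply: inj_of_lt_neq => i j lt_ij E.
have lt_ip : nat_of_ord i < p by have := ltn_ord j; lia.
have E_edge : proj1_sig xi (@inord p i) = proj1_sig xi (@inord p i.+1).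
  rewrite inord_val; apply: val_inj; apply/eqP; rewrite eqn_leq (proj2_sig xi) ?E;
    by [rewrite (proj2_sig xi) // inordK //; lia | rewrite inordK //; lia].
have e : sob (scomp xi) (@inord p i) = sob (scomp xi) (@inord p i.+1).
  by rewrite /= E_edge.
apply: nd; apply: (degenerate_of_identity_edge (Y := scomp xi) lt_ip e) => h /=.
exact: shom_castE.
Qed.

Lemma scomp_sob {D : Cat} {X Y : simplex D} {p} {xi : mono p (sdim Y)}
    (Exi : scomp xi = X) (Ep : (sdim X).+1 = p.+1) i :
  sob X i = sob Y (proj1_sig xi (cast_ord Ep i)).
Proof. by subst X; rewrite cast_ord_id. Qed.

Lemma dhom_sob {D : Cat} {X Y : simplex D} (f : DHom X Y) i :
  sob X i = sob Y (proj1_sig (proj1_sig f) i).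
Proof. by case: f => xi Exi; rewrite (scomp_sob Exi erefl) cast_ord_id. Qed.

Lemma dhom_inj {D : Cat} {X Y : simplex D} (f : DHom X Y) :
  nondegenerate X -> injective (proj1_sig (proj1_sig f)).
Proof. by case: f => xi Exi nd; apply: nondegenerate_scomp_inj; rewrite Exi. Qed.

Lemma scomp_inj_eq {D : Cat} {Y : simplex D} {p} {xi : mono p (sdim Y)} :
  p = sdim Y -> injective (proj1_sig xi) -> scomp xi = Y.
Proof.
move=> Ep; subst p => xi_inj; rewrite -[RHS]scomp_id; apply: scomp_transport => // i.
by rewrite (homo_inj_ord_id (proj2_sig xi) xi_inj).
Qed.

Definition antisymmetric_cat (D : Cat) :=
  forall x y : D, Hom D x y -> Hom D y x -> x = y.

Definition endo_trivial (D : Cat) := forall (x : D) (f : Hom D x x), f = idc x.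

Lemma Sd_antisymmetric (D : Cat) : antisymmetric_cat (Sd D).
Proof.
move=> [X ndX] [Y ndY] /= [_ [f _]] [_ [g _]].
have f_inj := dhom_inj f ndX.
have le_XY := homo_inj_leq_dim f_inj.
have le_YX := homo_inj_leq_dim (dhom_inj g ndY).
suff EXY : X = Y by subst Y; congr exist; apply: proof_irrelevance.
case: f f_inj le_XY le_YX => xi Exi /= xi_inj le_XY le_YX.
by rewrite -Exi; apply: scomp_inj_eq; first lia.
Qed.

Lemma Sd_endo_trivial (D : Cat) : endo_trivial (Sd D).
Proof.
move=> [X ndX] [P [f EP]]; subst P.
have -> : f = did X.
  apply: dhom_eq => i /=.
  exact: (homo_inj_ord_id (proj2_sig (proj1_sig f)) (dhom_inj f ndX)).
by rewrite /qid /cls; congr exist; apply: proof_irrelevance.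
Qed.

Lemma nondegenerate_sob_inj {D : Cat} {Y : simplex D} :
  antisymmetric_cat D -> endo_trivial D -> nondegenerate Y -> injective (sob Y).
Proof.
move=> D_antisym D_endo nd; apply: inj_of_lt_neq => a b lt_ab E.
have lt_a : nat_of_ord a < sdim Y by have := ltn_ord b; lia.
have le_a : @inord (sdim Y) a <= @inord (sdim Y) a.+1 by rewrite !inordK //; lia.
have le_b : @inord (sdim Y) a.+1 <= b by rewrite !inordK //; lia.
have Eb : sob Y b = sob Y (@inord (sdim Y) a) by rewrite inord_val.
have e := D_antisym _ _ (shom Y le_a) (castHom erefl Eb (shom Y le_b)).
apply: nd; apply: (degenerate_of_identity_edge lt_a e) => h.
by rewrite -(D_endo _ (castHom erefl (esym e) (shom Y h))) castHom_esymK.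
Qed.

Lemma Sd_thin (D : Cat) (X Y : Sd D) (f g : Hom (Sd D) X Y) :
  antisymmetric_cat D -> endo_trivial D -> f = g.
Proof.
case: X f g => X ndX; case: Y => Y ndY [P [f EP]] [Q [g EQ]] /= D_antisym D_endo.
subst P Q; suff -> : f = g by [].
apply: dhom_eq => i; apply: (nondegenerate_sob_inj D_antisym D_endo ndY).
by rewrite -!dhom_sob.
Qed.

Theorem theorem21 (C : Cat) :
  (forall (X Y : Ob (Sd (Sd C))) (f g : Hom (Sd (Sd C)) X Y), f = g) /\
  (forall X Y : Ob (Sd (Sd C)),
      Hom (Sd (Sd C)) X Y -> Hom (Sd (Sd C)) Y X -> X = Y).
Proof.
split; last exact: Sd_antisymmetric.
by move=> X Y f g; apply: Sd_thin; [exact: Sd_antisymmetric | exact: Sd_endo_trivial].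
Qed.
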